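(* Let $f:M\to N$ be a map between MT-algebras satisfying (P1), (P2) and (P4). The following are equivalent: (1) $f$ satisfies (P3), i.e. $f$ is a proximity morphism; (2) for all $a_1,a_2,b_1,b_2\in M$, if $a_1\prec b_1$ and $a_2\prec b_2$ then $f(a_1\vee a_2)\prec f(b_1)\vee f(b_2)$; (3) for all $a,b\in M$, if $a\prec b$ then $\neg f(\neg a)\prec f(b)$. Here $\prec$ on $M$ is the cons-below relation of $M$ and $\prec$ on $N$ is that of $N$.
   Context: An MT-algebra is a pair $(M,\square)$ where $M$ is a complete boolean algebra and $\square:M\to M$ satisfies $\square 1=1$, $\square(a\wedge b)=\square a\wedge\square b$, $\square a\le a$, $\square a\le\square\square a$. Write $\Diamond a=\neg\square\neg a$. An element $a$ is open if $\square a=a$, closed if $\Diamond a=a$, and locally closed if $a=\square b\wedge\Diamond c$ for some $b,c\in M$; $\mathcal O M$, $\mathcal{LC} M$ denote the sets of open and locally closed elements; $\mathcal O M$ is a frame. $\mathrm{cons}\,M$ is the set of finite joins of elements of $\mathcal{LC}M$. The cons-below relation: $a\prec b$ iff there is $c\in\mathrm{cons}\,M$ with $a\le c\le b$. Conditions on a map $f:M\to N$: (P1) $f$ maps $\mathcal O M$ into $\mathcal O N$ and $f|_{\mathcal O M}:\mathcal O M\to\mathcal O N$ is a frame morphism; (P2) $f(a\wedge b)=f(a)\wedge f(b)$ for all $a,b\in M$; (P3) $f(\bigvee S)=\bigvee\{f(s):s\in S\}$ for every finite $S\subseteq\mathcal{LC}M$; (P4) $f(a)=\bigvee\{f(x):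 x\in\mathcal{LC}M,\ x\le a\}$ for every $a\in M$. A proximity morphism is a map satisfying (P1)–(P4). *)

From mathcomp Require Import all_boot all_order.
Set Implicit Arguments. Unset Strict Implicit. Unset Printing Implicit Defensive.
Import Order.Theory.
Local Open Scope order_scope.

(* A boolean algebra is a complemented distributive lattice with top and
   bottom (ctbDistrLatticeType). Completeness is witnessed by an arbitrary
   join operator [sup] on predicates. *)
Record MTAlgebra (d : Order.disp_t) (T : ctbDistrLatticeType d) := {
  sup : (T -> Prop) -> T;
  sup_ub : forall (S : T -> Prop) x, S x -> x <= sup S;
  sup_least : forall (S : T -> Prop) y, (forall x, S x -> x <= y) -> sup S <= y;
  box : T -> T;
  box1 : box \top = \top;
  boxI : forall a b, box (a `&` b) = box a `&` box b;
  box_le : forall a, box a <= a;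
  box_box : forall a, box a <= box (box a)
}.

Section MTDefs.
Context {d : Order.disp_t} {T : ctbDistrLatticeType d} (M : MTAlgebra T).

Definition dia (a : T) : T := ~` box M (~` a).
Definition is_open (a : T) : Prop := box M a = a.
Definition is_closed (a : T) : Prop := dia a = a.
Definition is_LC (a : T) : Prop := exists b c, a = box M b `&` dia c.
Definition is_cons (a : T) : Prop :=
  exists s : seq T, (forall x, x \in s -> is_LC x) /\ a = \join_(x <- s) x.
Definition cons_below (a b : T) : Prop :=
  exists c, is_cons c /\ a <= c /\ c <= b.
End MTDefs.

Section Props.
Context {d1 : Order.disp_t} {T1 : ctbDistrLatticeType d1} (M : MTAlgebra T1)
        {d2 : Order.disp_t} {T2 : ctbDistrLatticeType d2} (N : MTAlgebra T2).

(* (P1): f maps opens to opens and restricts to a frame morphism O M -> O N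
   (preserves top, binary meets and arbitrary joins of open elements). *)
Definition P1 (f : T1 -> T2) : Prop :=
  [/\ forall a, is_open M a -> is_open N (f a),
      f \top = \top,
      forall a b, is_open M a -> is_open M b -> f (a `&` b) = f a `&` f b &
      forall S : T1 -> Prop, (forall x, S x -> is_open M x) ->
        f (sup M S) = sup N (fun y => exists2 x, S x & y = f x)].

Definition P2 (f : T1 -> T2) : Prop := forall a b, f (a `&` b) = f a `&` f b.

Definition P3 (f : T1 -> T2) : Prop :=
  forall s : seq T1, (forall x, x \in s -> is_LC M x) ->
    f (\join_(x <- s) x) = \join_(x <- s) f x.

Definition P4 (f : T1 -> T2) : Prop :=
  forall a, f a = sup N (fun y => exists2 x, is_LC M x /\ x <= a & y = f x).
End Props.

From mathcomp Require Import all_boot all_order.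
Import Order.Theory.
Set Implicit Arguments. Unset Strict Implicit.
Local Open Scope order_scope.

(* (P3) reduces, by induction on the list of locally closed elements, to the
   binary inequality f (x `|` y) <= f x `|` f y for x locally closed. *)

Section BooleanAlgebra.
Context {d : Order.disp_t} {T : ctbDistrLatticeType d}.

Lemma compl_unique (x y : T) : x `&` y = \bot -> x `|` y = \top -> y = ~` x.
Proof.
move=> xy0 xy1; apply/le_anti/andP; split; first by rewrite -disj_leC meetC xy0.
have : ~` x = ~` x `&` (x `|` y) by rewrite xy1 meetx1.
by rewrite meetUr meetCx join0x => ->; exact: leIr.
Qed.

Lemma leCx_join1 (x y : T) : ~` x <= y -> x `|` y = \top.
Proof. by move=> xy; apply/le_anti; rewrite lex1 -(joinxC x) leU2. Qed.

End BooleanAlgebra.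

Section MTAlgebraTheory.
Context {d : Order.disp_t} {T : ctbDistrLatticeType d} (M : MTAlgebra T).

Lemma box_idem a : box M (box M a) = box M a.
Proof. by apply/le_anti; rewrite box_le box_box. Qed.

Lemma is_open_box a : is_open M (box M a).
Proof. exact: box_idem. Qed.

Lemma box0 : box M \bot = \bot.
Proof. by apply/le_anti; rewrite box_le le0x. Qed.

Lemma dia1 : dia M \top = \top.
Proof. by rewrite /dia compl1 box0 compl0. Qed.

Lemma is_LC_box a : is_LC M (box M a).
Proof. by exists a, \top; rewrite dia1 meetx1. Qed.

Lemma is_LC_dia a : is_LC M (dia M a).
Proof. by exists \top, a; rewrite box1 meet1x. Qed.

Lemma LC_compl x : is_LC M x ->
  exists y z, [/\ is_LC M y, is_LC M z & ~` x = y `|` z].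
Proof.
move=> [b [c ->]]; exists (dia M (~` b)), (box M (~` c)).
by split; [exact: is_LC_dia | exact: is_LC_box | rewrite complI /dia !complK].
Qed.

Lemma is_cons_LC x : is_LC M x -> is_cons M x.
Proof.
move=> Lx; exists [:: x]; split; last by rewrite big_seq1.
by move=> y; rewrite inE => /eqP ->.
Qed.

Lemma is_cons_join c1 c2 : is_cons M c1 -> is_cons M c2 -> is_cons M (c1 `|` c2).
Proof.
move=> [s1 [Ls1 ->]] [s2 [Ls2 ->]]; exists (s1 ++ s2); split; last by rewrite big_cat.
by move=> x; rewrite mem_cat => /orP[/Ls1|/Ls2].
Qed.

Lemma cons_below_refl c : is_cons M c -> cons_below M c c.
Proof. by move=> Cc; exists c. Qed.

Lemma cons_below_le a b : cons_below M a b -> a <= b.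
Proof. by move=> [c [_ [ac cb]]]; exact: le_trans ac cb. Qed.

End MTAlgebraTheory.

Section MeetMorphism.
Context {d1 : Order.disp_t} {T1 : ctbDistrLatticeType d1} (M : MTAlgebra T1)
        {d2 : Order.disp_t} {T2 : ctbDistrLatticeType d2} (N : MTAlgebra T2)
        (f : T1 -> T2).
Hypothesis fP1 : P1 M N f.
Hypothesis fP2 : P2 f.

Lemma homo_f : {homo f : a b / a <= b}.
Proof. by move=> a b /meet_idPl ab; rewrite -ab fP2; exact: leIr. Qed.

Lemma f1 : f \top = \top.
Proof. by case: fP1. Qed.

Lemma f0 : f \bot = \bot.
Proof.
case: fP1 => _ _ _ f_sup.
have sup0 : sup M (fun _ => False) = \bot.
  by apply/le_anti; rewrite le0x andbT; apply: sup_least.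
have := f_sup (fun _ => False) (fun _ (h : False) => match h with end).
rewrite sup0 => ->; apply/le_anti; rewrite le0x andbT.
by apply: sup_least => y [].
Qed.

Lemma f_compl_of_join1 a : f a `|` f (~` a) = \top -> f (~` a) = ~` f a.
Proof. by apply: compl_unique; rewrite -fP2 meetxC f0. Qed.

(* Split a `|` b along a and ~` a; (P2) then applies to each piece. *)
Lemma f_join_le_of_compl a b :
  ~` f (~` a) <= f a -> f (a `|` b) <= f a `|` f b.
Proof.
move=> /leCx_join1; rewrite joinC => fa1.
rewrite -[f (a `|` b)]meetx1 -fa1 meetUr -!fP2.
apply: leU2; apply: homo_f; first exact: leIr.
by rewrite meetUl meetxC join0x leIl.
Qed.

Lemma P3_of_join_le :
  (forall x y, is_LC M x -> is_cons M y -> f (x `|` y) <= f x `|` f y) -> P3 M f.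
Proof.
move=> join_le s; elim: s => [|x s IHs] Ls; first by rewrite !big_nil f0.
have Ls' y : y \in s -> is_LC M y by move=> ys; apply: Ls; rewrite inE ys orbT.
rewrite !big_cons -IHs //; apply/le_anti.
rewrite join_le ?leUx ?homo_f ?leUl ?leUr //; first exact/Ls/mem_head.
by exists s.
Qed.

Hypothesis fP3 : P3 M f.

Lemma f_join_cons c1 c2 :
  is_cons M c1 -> is_cons M c2 -> f (c1 `|` c2) = f c1 `|` f c2.
Proof.
move=> [s1 [Ls1 ->]] [s2 [Ls2 ->]].
have Ls x : x \in s1 ++ s2 -> is_LC M x by rewrite mem_cat => /orP[/Ls1|/Ls2].
by rewrite -big_cat (fP3 Ls) big_cat -!fP3.
Qed.

Lemma f_compl_LC x : is_LC M x -> f (~` x) = ~` f x.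
Proof.
move=> Lx; apply: f_compl_of_join1.
have [y [z [Ly Lz xC]]] := LC_compl Lx.
have Cy_z : is_cons M (y `|` z) by apply: is_cons_join; exact: is_cons_LC.
by rewrite xC -(f_join_cons (is_cons_LC Lx) Cy_z) -xC joinxC f1.
Qed.

Lemma f_compl_cons c : is_cons M c -> f (~` c) = ~` f c.
Proof.
move=> [s [Ls ->]]; rewrite fP3 //; elim: s Ls => [|x s IHs] Ls.
  by rewrite !big_nil compl0 f1 compl0.
rewrite !big_cons !complU fP2 IHs => [|y ys]; last by apply: Ls; rewrite inE ys orbT.
by rewrite f_compl_LC //; apply/Ls/mem_head.
Qed.

Lemma f_LC x : is_LC M x -> is_LC N (f x).
Proof.
case: fP1 => f_open _ _ _ [b [c ->]]; rewrite fP2.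
exists (f (box M b)), (~` f (box M (~` c))).
rewrite /dia complK (f_open _ (is_open_box M b)) (f_open _ (is_open_box M (~` c))).
by rewrite -f_compl_LC //; exact: is_LC_box.
Qed.

Lemma f_cons c : is_cons M c -> is_cons N (f c).
Proof.
move=> [s [Ls ->]]; exists (map f s); split; last by rewrite fP3 // big_map.
by move=> y /mapP [x xs ->]; apply/f_LC/Ls.
Qed.

End MeetMorphism.

Theorem lemma3p10 (d1 : Order.disp_t) (T1 : ctbDistrLatticeType d1) (M : MTAlgebra T1)
  (d2 : Order.disp_t) (T2 : ctbDistrLatticeType d2) (N : MTAlgebra T2)
  (f : T1 -> T2) :
  P1 M N f -> P2 f -> P4 M N f ->
  (P3 M f <->
     (forall a1 a2 b1 b2, cons_below M a1 b1 -> cons_below M a2 b2 ->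
        cons_below N (f (a1 `|` a2)) (f b1 `|` f b2))) /\
  (P3 M f <->
     (forall a b, cons_below M a b -> cons_below N (~` f (~` a)) (f b))).
Proof.
move=> fP1 fP2 _; have f_homo := homo_f fP2.
split; split.
- move=> fP3 a1 a2 b1 b2 [c1 [Cc1 [ac1 cb1]]] [c2 [Cc2 [ac2 cb2]]].
  exists (f (c1 `|` c2)); split; first exact/(f_cons fP1 fP2 fP3)/is_cons_join.
  split; first by apply/f_homo/leU2.
  by rewrite (f_join_cons fP3) //; apply: leU2; apply: f_homo.
- move=> below2; apply: (P3_of_join_le fP1 fP2) => x y Lx Cy.
  apply/cons_below_le/below2; apply: cons_below_refl => //; exact: is_cons_LC.
- move=> fP3 a b [c [Cc [ac cb]]]; exists (f c).
  split; first exact: (f_cons fP1 fP2 fP3).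
  split; last exact: f_homo.
  by rewrite -[f c]complK -(f_compl_cons fP1 fP2 fP3 Cc) leC f_homo // leC.
- move=> belowC; apply: (P3_of_join_le fP1 fP2) => x y Lx _.
  apply/(f_join_le_of_compl fP2)/cons_below_le/belowC.
  exact/cons_below_refl/is_cons_LC.
Qed.
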